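(* Let $X$ be a countably based $T_0$-space and $\rho\colon\subseteq\omega^\omega\to X$ an admissible representation of $X$. For all countable ordinals $\alpha,\theta>0$ and every $S\subseteq X$: $S\in D_\alpha(\mathbf{\Sigma}^0_\theta(X))$ if and only if $\rho^{-1}(S)\in D_\alpha(\mathbf{\Sigma}^0_\theta(\mathrm{dom}(\rho)))$, where $\mathrm{dom}(\rho)$ has the subspace topology from $\omega^\omega$.
   Context: $\omega^\omega$ has the product topology. A partial continuous $\rho\colon\subseteq\omega^\omega\to X$ is an admissible representation of $X$ if for every partial continuous $f\colon\subseteq\omega^\omega\to X$ there is a partial continuous $g\colon\subseteq\omega^\omega\to\omega^\omega$ with $f=\rho\circ g$. Borel hierarchy on a topological space $Z$: $\mathbf{\Sigma}^0_1(Z)$ = open sets; for $1<\alpha<\omega_1$, $\mathbf{\Sigma}^0_\alpha(Z)$ consists of sets $\bigcup_{i\in\omega}(B_i\setminus B_i')$ with $B_i,B_i'\in\mathbf{\Sigma}^0_{\beta_i}(Z)$, $\beta_i<\alpha$. Difference hierarchy: write an ordinal as $\alpha=\beta+n$ with $\beta$ a limit or $0$ and $n<\omega$; $r(\alpha)=0$ if $n$ is even, $1$ otherwise. For an increasing sequence $(A_\beta)_{\beta<\alpha}$ ($A_\gamma\subseteq A_\beta$ for $\gamma<\beta<\alpha$), $D_\alpha((A_\beta)_{\beta<\alpha})=\bigcup\{A_\beta\setminus\bigcup_{\gamma<\beta}A_\gamma\mid\beta<\alpha,\ r(\beta)\ne r(\alpha)\}$, and $D_\alpha(\mathbf{\Sigma}^0_\theta(Z))$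 is the class of all such sets with each $A_\beta\in\mathbf{\Sigma}^0_\theta(Z)$. *)

From HB Require Import structures.
From mathcomp Require Import all_boot all_order all_algebra.
From mathcomp Require Import all_classical all_reals all_analysis.
Set Implicit Arguments. Unset Strict Implicit. Unset Printing Implicit Defensive.
Local Open Scope classical_set_scope.

Definition baire : Type := {ptws nat -> nat}.
HB.instance Definition _ := Topological.on baire.

(** Their order types are exactly the countable
    ordinals; an ordinal is represented by (any) well-order of that type. *)
Record cwo := CWO {
  cwo_car :> countType;
  cwo_lt : cwo_car -> cwo_car -> Prop;
  cwo_wf : well_founded cwo_lt;
  cwo_trans : forall x y z, cwo_lt x y -> cwo_lt y z -> cwo_lt x z;
  cwo_total : forall x y, cwo_lt x y \/ x = y \/ cwo_lt y x }.

Section Ordinals.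
Variable A : cwo.
Local Notation lt := (@cwo_lt A).

Definition imm_pred (a b : A) := lt a b /\ forall c, lt a c -> lt c b -> False.

(** parity of the ordinal (order type of the initial segment) of b:
    b = lambda + n with lambda limit or 0; even iff n even. *)
Inductive ord_even : A -> Prop :=
  | ev_lim b : (forall a, ~ imm_pred a b) -> ord_even b
  | ev_succ a b : imm_pred a b -> ord_odd a -> ord_even b
with ord_odd : A -> Prop :=
  | od_succ a b : imm_pred a b -> ord_even a -> ord_odd b.

(** r(alpha) = 1 for alpha the order type of A: alpha = m + 1 (m the maximum
    of A) with m of even parity.  If A has no maximum, alpha is 0 or a limit,
    hence even. *)
Definition top_odd : Prop :=
  exists m : A, (forall c, c = m \/ lt c m) /\ ord_even m.

(** b has exactly one predecessor, i.e. the ordinal of b is 1 *)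
Definition one_pred (b : A) := exists a, lt a b /\ forall c, lt c b -> c = a.
Definition one_elem := exists a : A, forall c : A, c = a.
End Ordinals.

(** For a countable well-order Th of type theta and
    b : Th whose initial segment has type beta, [SigmaE b] is
    Sigma^0_beta(Z) (for beta >= 1; it is empty for beta = 0, so that only
    levels beta >= 1 are used). [Sigma Th] is Sigma^0_theta(Z). *)
Section Borel.
Variable Z : topologicalType.
Variable Th : cwo.

Inductive SigmaE : Th -> set Z -> Prop :=
  | SE_open b (U : set Z) : one_pred b -> open U -> SigmaE b U
  | SE_union b (B B' : nat -> set Z) (v : nat -> Th) :
      ~ one_pred b -> (forall i, cwo_lt (v i) b) ->
      (forall i, SigmaE (v i) (B i)) -> (forall i, SigmaE (v i) (B' i)) ->
      SigmaE b (\bigcup_i (B i `\` B' i)).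

Definition Sigma (U : set Z) : Prop :=
  (one_elem Th /\ open U) \/
  (~ one_elem Th /\
   exists (B B' : nat -> set Z) (v : nat -> Th),
     (forall i, SigmaE (v i) (B i)) /\ (forall i, SigmaE (v i) (B' i)) /\
     U = \bigcup_i (B i `\` B' i)).
End Borel.

Definition Diff (Z : Type) (A : cwo) (C : set (set Z)) (S : set Z) : Prop :=
  exists F : A -> set Z,
    (forall b, C (F b)) /\
    (forall c b, cwo_lt c b -> F c `<=` F b) /\
    S = \bigcup_(b in [set b | ~ (ord_odd b <-> top_odd A)])
          (F b `\` \bigcup_(c in [set c | cwo_lt c b]) F c).

Definition admissible (X : topologicalType) (D : set baire) (rho : baire -> X) :=
  {within D, continuous rho} /\
  forall (Df : set baire) (f : baire -> X), {within Df, continuous f} ->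
    exists (Dg : set baire) (g : baire -> baire),
      {within Dg, continuous g} /\
      Df = [set p | Dg p /\ D (g p)] /\
      (forall p, Df p -> f p = rho (g p)).

(* Preimages along the continuous map rho preserve every class
   D_alpha(Sigma^0_theta), which gives one direction.  For the converse, a
   countable base of the T_0 space X yields the standard representation delta,
   whose names of x enumerate the basic neighbourhoods of x; delta is
   continuous, open and surjective, and admissibility factors it as
   rho \o h with h continuous, so delta^-1(S) lies in the class.  The class is
   carried back to X by the Vaught transform
   E |-> {x | E is not meager in the fiber delta^-1(x)}.  Every fiber is a
   Baire space and every Sigma^0_theta set has the Baire property in every
   fiber, so, after localising on basic open sets, the transform commutes with
   the countable unions of differences building Sigma^0_theta; on open sets U
   it gives delta(U), which is open.  Applied to the levels of a difference
   representation of delta^-1(S), it yields one of S: each x is placed at the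
   least level whose transform contains it. *)

From HB Require Import structures.
From mathcomp Require Import all_boot all_order all_algebra.
From mathcomp Require Import all_classical all_reals all_analysis.

Set Implicit Arguments.
Unset Strict Implicit.
Unset Printing Implicit Defensive.
Local Open Scope classical_set_scope.

Lemma well_founded_min (T : Type) (R : T -> T -> Prop) (Q : T -> Prop) a :
  well_founded R -> Q a -> exists b, Q b /\ forall c, R c b -> ~ Q c.
Proof.
move=> wfR Qa; apply: contrapT => nmin.
elim/(well_founded_ind wfR): a Qa => b IH Qb.
by apply: nmin; exists b; split => // c /IH.
Qed.

Definition layer (T : Type) (A : cwo) (F : A -> set T) (b : A) : set T :=
  F b `\` \bigcup_(c in [set c | cwo_lt c b]) F c.

Lemma layer_uniq (T : Type) (A : cwo) (F : A -> set T) b b' t :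
  layer F b t -> layer F b' t -> b = b'.
Proof.
move=> [Fbt nlow] [Fb't nlow']; case: (cwo_total b b') => [bb'|[//|b'b]].
  by case: nlow'; exists b.
by case: nlow; exists b'.
Qed.

Definition nat_reindex (T : Type) (J : countType) (t0 : T) (f : J -> T) k : T :=
  if (unpickle k : option J) is Some j then f j else t0.

Lemma bigcup_setD_reindex (T : Type) (J : countType) (E : set T)
    (G G' : J -> set T) :
  \bigcup_j (G j `\` G' j) = \bigcup_k (nat_reindex E G k `\` nat_reindex E G' k).
Proof.
apply/seteqP; split=> t.
  by move=> [j _ Gt]; exists (pickle j) => //; rewrite /nat_reindex pickleK.
move=> [k _]; rewrite /nat_reindex; case: unpickle => [j Gt|[Et []//]].
by exists j.
Qed.

Section BorelClasses.
Variables (Z : topologicalType) (Th : cwo).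

Lemma SigmaE_bigcup_setD (J : countType) (G G' : J -> set Z) (w : J -> Th)
    (b c : Th) (E : set Z) :
  ~ one_pred b -> cwo_lt c b -> SigmaE c E -> (forall j, cwo_lt (w j) b) ->
  (forall j, SigmaE (w j) (G j)) -> (forall j, SigmaE (w j) (G' j)) ->
  SigmaE b (\bigcup_j (G j `\` G' j)).
Proof.
move=> nb cb SE wb SG SG'; rewrite (bigcup_setD_reindex E).
by apply: (SE_union (v := nat_reindex c w) nb) => k;
  rewrite /nat_reindex; case: unpickle.
Qed.

Lemma Sigma_bigcup_setD (J : countType) (G G' : J -> set Z) (w : J -> Th)
    (c : Th) (E : set Z) :
  ~ one_elem Th -> SigmaE c E ->
  (forall j, SigmaE (w j) (G j)) -> (forall j, SigmaE (w j) (G' j)) ->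
  Sigma Th (\bigcup_j (G j `\` G' j)).
Proof.
move=> nTh SE SG SG'; right; split => //.
exists (nat_reindex E G), (nat_reindex E G'), (nat_reindex c w).
split; [|split; last exact: bigcup_setD_reindex];
  by move=> k; rewrite /nat_reindex; case: unpickle.
Qed.

End BorelClasses.

Section Preimage.
Variables (Y Z : topologicalType) (f : Y -> Z) (Th : cwo).
Hypothesis f_cont : continuous f.

Lemma SigmaE_preimage (b : Th) U : SigmaE b U -> SigmaE b (f @^-1` U).
Proof.
elim=> {b U} [b U ob oU|b B B' v nb vb _ IH _ IH'].
  by apply: SE_open => //; exact: open_comp.
by rewrite preimage_bigcup; exact: SE_union.
Qed.

Lemma Sigma_preimage U : Sigma Th U -> Sigma Th (f @^-1` U).
Proof.
case=> [[Th1 oU]|[nTh1 [B [B' [v [SB [SB' ->]]]]]]].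
  by left; split => //; exact: open_comp.
right; split => //; exists (fun i => f @^-1` B i), (fun i => f @^-1` B' i), v.
by split; [|split; last exact: preimage_bigcup] => i; exact: SigmaE_preimage.
Qed.

Lemma Diff_preimage (A : cwo) S :
  Diff A (Sigma Th) S -> Diff A (Sigma Th) (f @^-1` S).
Proof.
case=> F [SF [Fmono ->]]; exists (fun b => f @^-1` F b); split.
  by move=> b; exact: Sigma_preimage.
split; first by move=> c b cb x /= /Fmono; apply.
by rewrite preimage_bigcup; apply: eq_bigcupr => b _; rewrite -preimage_bigcup.
Qed.

End Preimage.

Section VaughtTransform.
Variables (P X : topologicalType) (d : P -> X).
Variables (Idx : countType) (N : Idx -> set P).
Hypothesis N_open : forall n, open (N n).
Hypothesis N_base : forall (U : set P) p, open U -> U p -> exists2 n, N n p & N n `<=` U.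

Definition fiber (x : X) : set P := d @^-1` [set x].

Definition fiber_nowhere_dense x (E : set P) := forall n, fiber x `&` N n !=set0 ->
  exists m, [/\ N m `<=` N n, fiber x `&` N m !=set0 & fiber x `&` N m `&` E `<=` set0].

Definition fiber_meager x (E : set P) := exists Es : nat -> set P,
  (forall k, fiber_nowhere_dense x (Es k)) /\ fiber x `&` E `<=` \bigcup_k Es k.

Lemma fiber_nowhere_dense_disjoint x E :
  fiber x `&` E `<=` set0 -> fiber_nowhere_dense x E.
Proof. by move=> xE n xn; exists n; split => // p [[xp _] Ep]; apply: (xE p). Qed.

Lemma fiber_nowhere_dense_meager x E : fiber_nowhere_dense x E -> fiber_meager x E.
Proof. by move=> xE; exists (fun=> E); split => // p [_ Ep]; exists 0. Qed.

Lemma fiber_meager_disjoint x E : fiber x `&` E `<=` set0 -> fiber_meager x E.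
Proof. by move/fiber_nowhere_dense_disjoint/fiber_nowhere_dense_meager. Qed.

Lemma fiber_meagerS x E E' :
  fiber x `&` E' `<=` E -> fiber_meager x E -> fiber_meager x E'.
Proof.
move=> sE [Es [Es_nwd cover]]; exists Es; split => // p [xp E'p].
by apply: cover; split => //; apply: sE.
Qed.

Lemma fiber_meager_bigcup (J : countType) (K : set J) x (E : J -> set P) :
  (forall j, K j -> fiber_meager x (E j)) -> fiber_meager x (\bigcup_(j in K) E j).
Proof.
move=> mE; have /choice [Es HEs] : forall j, exists Es : nat -> set P,
    (forall k, fiber_nowhere_dense x (Es k)) /\
    (K j -> fiber x `&` E j `<=` \bigcup_k Es k).
  move=> j; case: (pselect (K j)) => [/mE [Es [? ?]]|nKj]; first by exists Es.
  exists (fun=> set0); split=> [k|/nKj//].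
  by apply: fiber_nowhere_dense_disjoint => ? [_ []].
exists (fun k => if (unpickle k : option (J * nat)) is Some (j, l) then Es j l else set0).
split=> [k|p [xp [j Kj Ep]]].
  case: unpickle => [[j l]|]; first exact: (HEs j).1.
  by apply: fiber_nowhere_dense_disjoint => ? [_ []].
have [l _ Esp] := (HEs j).2 Kj p (conj xp Ep).
by exists (pickle (j, l)) => //; rewrite pickleK.
Qed.

Lemma fiber_meagerU x E E' :
  fiber_meager x E -> fiber_meager x E' -> fiber_meager x (E `|` E').
Proof.
move=> mE mE'.
apply: fiber_meagerS (@fiber_meager_bigcup bool setT x (fun b => if b then E else E') _).
  by move=> p [_ [Ep|E'p]]; [exists true|exists false].
by case.
Qed.

Lemma fiber_nonmeager_bigcup (J : countType) (K : set J) x (E : J -> set P) :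
  ~ fiber_meager x (\bigcup_(j in K) E j) -> exists2 j, K j & ~ fiber_meager x (E j).
Proof.
move=> nmE; apply: contrapT => nj; apply/nmE/fiber_meager_bigcup => j Kj.
by apply: contrapT => nmj; apply: nj; exists j.
Qed.

Lemma fiber_nonmeager_meets x E : ~ fiber_meager x E -> fiber x `&` E !=set0.
Proof.
move=> nmE; apply: contrapT => nxE; apply/nmE/fiber_meager_disjoint => p xEp.
by apply: nxE; exists p.
Qed.

Hypothesis fiber_baire : forall x n, fiber x `&` N n !=set0 -> ~ fiber_meager x (N n).

Definition fiber_baire_property x (E : set P) := forall n, fiber x `&` N n !=set0 ->
  exists m, [/\ N m `<=` N n, fiber x `&` N m !=set0 &
    fiber_meager x (N m `&` E) \/ fiber_meager x (N m `\` E)].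

Lemma fiber_baire_property_comeager x E n : fiber_baire_property x E ->
  ~ fiber_meager x (N n `&` E) ->
  exists m, [/\ N m `<=` N n, fiber x `&` N m !=set0 & fiber_meager x (N m `\` E)].
Proof.
move=> bpE nmE; apply: contrapT => no_m; apply: nmE.
pose decided m := N m `<=` N n /\
  (fiber_meager x (N m `&` E) \/ fiber_meager x (N m `\` E)).
have decided_meager m : decided m -> fiber_meager x (N m `&` E).
  move=> [mn [//|mE]]; case: (pselect (fiber x `&` N m !=set0)) => [xm|nxm].
    by case: no_m; exists m.
  by apply: fiber_meager_disjoint => p [xp [Nmp _]]; apply: nxm; exists p.
pose rest := N n `\` \bigcup_(m in decided) N m.
have rest_nwd : fiber_nowhere_dense x rest.
  move=> k xk; case: (pselect (fiber x `&` N k `&` N n !=set0)); last first.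
    by move=> nxkn; exists k; split => // q [[xq Nkq] [Nnq _]]; apply: nxkn; exists q.
  move=> [p [[xp Nkp] Nnp]].
  have [m1 Nm1p m1kn] := N_base (openI (N_open k) (N_open n)) (conj Nkp Nnp).
  have xm1 : fiber x `&` N m1 !=set0 by exists p.
  have [m2 [m21 xm2 bp2]] := bpE m1 xm1.
  exists m2; split => [q /m21 /m1kn []//|//|q [[_ Nm2q] [_]]]; apply.
  by exists m2 => //; split => // r /m21 /m1kn [].
apply: fiber_meagerS (fiber_meagerU (fiber_meager_bigcup decided_meager)
  (fiber_nowhere_dense_meager rest_nwd)) => p [_ [Nnp Ep]].
case: (pselect ((\bigcup_(m in decided) N m) p)) => [[m dm Nmp]|nU].
  by left; exists m.
by right.
Qed.

Lemma fiber_baire_property_open x U : open U -> fiber_baire_property x U.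
Proof.
move=> oU n [p [xp Nnp]].
case: (pselect (fiber x `&` N n `&` U !=set0)) => [[q [[xq Nnq] Uq]]|nxU].
  have [m Nmq mnU] := N_base (openI (N_open n) oU) (conj Nnq Uq).
  exists m; split; [by move=> r /mnU [] | by exists q | right].
  by apply: fiber_meager_disjoint => r [_ [/mnU [_ Ur]]].
exists n; split => //; first by exists p.
by left; apply: fiber_meager_disjoint => r [xr [Nnr Ur]]; apply: nxU; exists r.
Qed.

Lemma fiber_baire_property_setC x E :
  fiber_baire_property x E -> fiber_baire_property x (~` E).
Proof.
move=> bpE n /bpE [m [mn xm mE]]; exists m; split => //.
case: mE => mE; [right|left]; apply: fiber_meagerS mE => p [_ [Nmp Ep]]; split => //.
by apply: contrapT.
Qed.

Lemma fiber_baire_property_setI x E E' : fiber_baire_property x E ->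
  fiber_baire_property x E' -> fiber_baire_property x (E `&` E').
Proof.
move=> bpE bpE' n /bpE [m1 [m1n xm1 [mE|mE]]].
  by exists m1; split => //; left; apply: fiber_meagerS mE => p [_ [? [? _]]].
have [m2 [m21 xm2 [mE'|mE']]] := bpE' m1 xm1.
  exists m2; split => //; first by move=> p /m21 /m1n.
  by left; apply: fiber_meagerS mE' => p [_ [? [_ ?]]].
exists m2; split => //; first by move=> p /m21 /m1n.
right; apply: fiber_meagerS (fiber_meagerU mE mE') => p [_ [Nm2p nEE']].
case: (pselect (E p)) => Ep; last by left; split => //; exact: m21.
by right; split => // E'p; apply: nEE'.
Qed.

Lemma fiber_baire_property_bigcup x (E : nat -> set P) :
  (forall i, fiber_baire_property x (E i)) -> fiber_baire_property x (\bigcup_i E i).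
Proof.
move=> bpE n xn.
case: (pselect (fiber_meager x (N n `&` \bigcup_i E i))) => [mE|].
  by exists n; split => //; left.
rewrite setI_bigcupr => /fiber_nonmeager_bigcup [i _].
move=> /(fiber_baire_property_comeager (bpE i)) [m [mn xm mE]].
exists m; split => //; right.
by apply: fiber_meagerS mE => p [_ [Nmp nE]]; split => // Eip; apply: nE; exists i.
Qed.

Lemma SigmaE_fiber_baire_property (Th : cwo) (b : Th) E :
  SigmaE b E -> forall x, fiber_baire_property x E.
Proof.
elim=> {b E} [b U _ oU|b B B' v _ _ _ bpB _ bpB'] x.
  exact: fiber_baire_property_open.
by apply: fiber_baire_property_bigcup => i; apply: fiber_baire_property_setI;
  [|apply: fiber_baire_property_setC].
Qed.

Definition vaught (E : set P) : set X := [set x | ~ fiber_meager x E].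

Lemma vaughtS E E' : E' `<=` E -> vaught E' `<=` vaught E.
Proof. by move=> E'E x nmE' mE; apply/nmE'/(fiber_meagerS _ mE) => p [_ /E'E]. Qed.

Lemma vaught_open U : open U -> vaught U = d @` U.
Proof.
move=> oU; apply/seteqP; split=> x.
  by move/fiber_nonmeager_meets => [p [xp Up]]; exists p.
move=> [p Up xp] mU; have [n Nnp nU] := N_base oU Up.
apply: (@fiber_baire x n); first by exists p.
by apply: fiber_meagerS mU => q [_ /nU].
Qed.

Lemma fiber_nonmeager_localize x E O : open O -> ~ fiber_meager x (E `&` O) ->
  exists2 n, N n `<=` O & ~ fiber_meager x (N n `&` E).
Proof.
move=> oO nmE; have: ~ fiber_meager x (\bigcup_(n in [set n | N n `<=` O]) (N n `&` E)).
  apply: contra_not nmE; apply: fiber_meagerS => p [_ [Ep Op]].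
  by have [n Nnp nO] := N_base oO Op; exists n.
by case/fiber_nonmeager_bigcup => n; exists n.
Qed.

(* Localising on the basic sets [N m] is what lets the Baire property of the
   [B i] split the transform of a difference into a difference of transforms. *)
Lemma vaught_bigcup_setD (B B' : nat -> set P) O : open O ->
  (forall i x, fiber_baire_property x (B i)) ->
  (forall i x, fiber_baire_property x (B' i)) ->
  vaught ((\bigcup_i (B i `\` B' i)) `&` O) =
  \bigcup_(k : nat * Idx)
    (vaught (B k.1 `&` (N k.2 `&` O)) `\` vaught (B' k.1 `&` (N k.2 `&` O))).
Proof.
move=> oO bpB bpB'; apply/seteqP; split=> x; last first.
  move=> [[i m] _ /= [nmB mB']] mU; apply: nmB.
  apply: fiber_meagerS (fiber_meagerU mU (contrapT mB')) => p [_ [Bp [Nmp Op]]].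
  case: (pselect (B' i p)) => B'p; first by right.
  by left; split => //; exists i.
rewrite setI_bigcupl => /fiber_nonmeager_bigcup [i _ nmi].
have [n nO nmn] := fiber_nonmeager_localize oO nmi.
have bpi : fiber_baire_property x (B i `\` B' i).
  by apply: fiber_baire_property_setI; [|apply: fiber_baire_property_setC].
have [m [mn xm mC]] := fiber_baire_property_comeager bpi nmn.
exists (i, m) => //=; split=> [mB|].
  apply: (fiber_baire xm); apply: fiber_meagerS (fiber_meagerU mC mB) => p [_ Nmp].
  case: (pselect (B i p)) => Bip; last by left; split => // -[].
  by right; split => //; split => //; exact/nO/mn.
apply; apply: fiber_meagerS mC => p [_ [B'p [Nmp _]]].
by split => // -[_]; apply.
Qed.

Hypothesis d_open : forall U, open U -> open (d @` U).

Lemma SigmaE_vaught (Th : cwo) (b : Th) E :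
  SigmaE b E -> forall O, open O -> SigmaE b (vaught (E `&` O)).
Proof.
elim=> {b E} [b U bU oU|b B B' v nb vb SB IH SB' IH'] O oO.
  by rewrite vaught_open; [apply/SE_open/d_open/openI | apply: openI].
have bpB i : forall x, fiber_baire_property x (B i) :=
  SigmaE_fiber_baire_property (SB i).
have bpB' i : forall x, fiber_baire_property x (B' i) :=
  SigmaE_fiber_baire_property (SB' i).
rewrite vaught_bigcup_setD //.
apply: (SigmaE_bigcup_setD (w := fun k => v k.1) nb (vb 0) (IH 0 _ oO)) => k.
- exact: vb.
- exact/IH/openI.
- exact/IH'/openI.
Qed.

Lemma Sigma_vaught (Th : cwo) E : Sigma Th E -> Sigma Th (vaught E).
Proof.
case=> [[Th1 oE]|[nTh1 [B [B' [v [SB [SB' ->]]]]]]].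
  by left; split => //; rewrite vaught_open //; exact: d_open.
have bpB i : forall x, fiber_baire_property x (B i) :=
  SigmaE_fiber_baire_property (SB i).
have bpB' i : forall x, fiber_baire_property x (B' i) :=
  SigmaE_fiber_baire_property (SB' i).
rewrite -[\bigcup_i _]setIT vaught_bigcup_setD //; last exact: openT.
apply: (Sigma_bigcup_setD (w := fun k => v k.1) nTh1 (SigmaE_vaught (SB 0) openT)) => k.
- by apply: SigmaE_vaught; [exact: SB | exact: openI (N_open _) openT].
- by apply: SigmaE_vaught; [exact: SB' | exact: openI (N_open _) openT].
Qed.

Hypothesis d_surj : forall x, exists p, d p = x.

Lemma vaught_layer (A : cwo) (F : A -> set P) b x :
  layer (vaught \o F) b x -> fiber x `&` layer F b !=set0.
Proof.
move=> [nmFb nlow]; apply: fiber_nonmeager_meets => mL; apply: nmFb.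
have mlow : fiber_meager x (\bigcup_(c in [set c | cwo_lt c b]) F c).
  apply: fiber_meager_bigcup => c cb; apply: contrapT => nmc.
  by apply: nlow; exists c.
apply: fiber_meagerS (fiber_meagerU mL mlow) => p [_ Fbp].
by case: (pselect ((\bigcup_(c in [set c | cwo_lt c b]) F c) p)); [right|left].
Qed.

Lemma vaught_first_layer (A : cwo) (F : A -> set P) x :
  fiber x `<=` \bigcup_b F b -> exists b, layer (vaught \o F) b x.
Proof.
move=> cover; have [p xp] := d_surj x.
have [n Nnp _] := N_base (@openT P) (I : setT p).
have nmF : ~ fiber_meager x (\bigcup_b F b).
  move=> mF; apply: (@fiber_baire x n); first by exists p.
  by apply: fiber_meagerS mF => q [xq _]; apply: cover.
have [b0 _ nmb0] := fiber_nonmeager_bigcup nmF.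
have [b [nmb bmin]] := well_founded_min (Q := fun b => vaught (F b) x) (@cwo_wf A) nmb0.
by exists b; split => // -[c cb]; exact: bmin.
Qed.

Lemma Diff_vaught (A Th : cwo) S :
  Diff A (Sigma Th) (d @^-1` S) -> Diff A (Sigma Th) S.
Proof.
case=> F [SF [Fmono dS]]; exists (vaught \o F); split.
  by move=> b; exact: Sigma_vaught.
split; first by move=> c b cb; apply/vaughtS/Fmono.
apply/seteqP; split=> x; last first.
  move=> [b bpar /vaught_layer [p [xp Lp]]].
  have : (d @^-1` S) p by rewrite dS; exists b.
  by rewrite /= xp.
move=> Sx; have [b Lb] : exists b, layer (vaught \o F) b x.
  apply: vaught_first_layer => p xp.
  have : (d @^-1` S) p by rewrite /= xp.
  by rewrite dS => -[b _ [Fbp _]]; exists b.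
have [p [xp Lp]] := vaught_layer Lb.
have : (d @^-1` S) p by rewrite /= xp.
by rewrite dS => -[b' b'par Lp']; rewrite -(layer_uniq Lp Lp') in b'par; exists b.
Qed.

End VaughtTransform.

Lemma prefix_nth (s t : seq nat) i :
  prefix s t -> (i < size s)%N -> nth 0 t i = nth 0 s i.
Proof. by move=> st lti; move: st; rewrite prefixE => /eqP <-; rewrite nth_take. Qed.

Lemma prefix_mono (ts : nat -> seq nat) : (forall k, prefix (ts k) (ts k.+1)) ->
  forall k l, (k <= l)%N -> prefix (ts k) (ts l).
Proof.
move=> tsS k l /subnK <-; elim: (l - k)%N => [|j IH]; first exact: prefix_refl.
by rewrite addSn; exact: (@prefix_trans _ (ts (j + k)) _ _ IH (tsS _)).
Qed.

Definition cylinder (s : seq nat) : set baire :=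
  [set q | forall i, (i < size s)%N -> q i = nth 0 s i].

Lemma cylinder_mkseq (q : baire) n : cylinder (mkseq q n) q.
Proof. by move=> i; rewrite size_mkseq => lti; rewrite nth_mkseq. Qed.

Lemma cylinder_prefix s t : prefix s t -> cylinder t `<=` cylinder s.
Proof.
move=> st q qt i lti; rewrite qt ?(prefix_nth st) //.
exact: leq_trans lti (size_prefix st).
Qed.

Lemma prefix_mkseq (q : baire) s n :
  cylinder s q -> (size s <= n)%N -> prefix s (mkseq q n).
Proof.
move=> qs sn; rewrite prefixE.
have szs : size (take (size s) (mkseq q n)) = size s by rewrite size_takel ?size_mkseq.
apply/eqP/(@eq_from_nth _ 0) => // i; rewrite szs => lti.
by rewrite nth_take // nth_mkseq ?qs // (leq_trans lti).
Qed.

Lemma cylinder_mkseqS (q : baire) m n :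
  (m <= n)%N -> cylinder (mkseq q n) `<=` cylinder (mkseq q m).
Proof.
move=> mn; apply/cylinder_prefix/prefix_mkseq; first exact: cylinder_mkseq.
by rewrite size_mkseq.
Qed.

Lemma cylinder_nbhs (p : baire) n : nbhs p (cylinder (mkseq p n)).
Proof.
elim: n => [|n IH]; first by apply: filterS filterT => q _ i; rewrite size_mkseq.
have pn : nbhs p [set q : baire | q n = p n].
  apply: (@proj_continuous nat (fun=> nat) n p [set k | k = p n]).
  exact/principal_filterP.
apply: filterS (filterI IH pn) => q [qp qn] i; rewrite size_mkseq => lti.
rewrite nth_mkseq //; move: lti; rewrite ltnS leq_eqVlt => /predU1P [-> //|lti].
by rewrite qp ?size_mkseq // nth_mkseq.
Qed.

Lemma baire_nbhsP (p : baire) (U : set baire) :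
  nbhs p U <-> exists n, cylinder (mkseq p n) `<=` U.
Proof.
split=> [|[n pU]]; last exact: filterS pU (cylinder_nbhs p n).
pose F := [set V : set baire | exists n, cylinder (mkseq p n) `<=` V].
have F_filter : Filter F.
  split; first by exists 0.
  - move=> V W [n pV] [m pW]; exists (maxn n m) => q qp; split.
      by apply/pV/(cylinder_mkseqS (leq_maxl n m)).
    by apply/pW/(cylinder_mkseqS (leq_maxr n m)).
  - by move=> V W VW [n pV]; exists n => q /pV /VW.
have : {ptws, F --> (p : nat -> nat)}.
  apply/pointwise_cvgP => t V /principal_filterP Vpt.
  by exists t.+1 => q qp /=; rewrite qp ?size_mkseq // nth_mkseq.
exact.
Qed.

Lemma cylinder_open s : open (cylinder s).
Proof.
rewrite openE => q qs; apply/baire_nbhsP; exists (size s) => r rq i lti.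
by rewrite rq ?size_mkseq // nth_mkseq // qs.
Qed.

Lemma second_countable_nat_base (X : topologicalType) : @second_countable X ->
  exists b : nat -> set X, (forall n, open (b n)) /\
    (forall x W, nbhs x W -> exists n, b n x /\ b n `<=` W).
Proof.
case=> B /countable_injP [f finj] [B_open B_base].
pose b n := if pselect (exists U, B U /\ f U = n) is left e then projT1 (cid e) else set0.
have bB U : B U -> b (f U) = U.
  move=> BU; rewrite /b; case: pselect => [e|[]]; last by exists U.
  by case: (cid e) => V [BV fV] /=; apply: finj; rewrite ?inE.
exists b; split=> [n|x W /B_base [U [BU Ux] UW]]; last by exists (f U); rewrite bB.
rewrite /b; case: pselect => [e|_]; last exact: open0.
by case: (cid e) => V [BV _] /=; exact: B_open.
Qed.

Lemma kolmogorov_base_eq (X : topologicalType) (b : nat -> set X) : kolmogorov_space X ->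
  (forall x W, nbhs x W -> exists n, b n x /\ b n `<=` W) ->
  forall x y, (forall n, b n x <-> b n y) -> x = y.
Proof.
move=> T0 b_base x y bxy; apply: contrapT => nxy.
have /T0 [W [[xW yW]|[yW xW]]] : x != y by apply/eqP.
  have [n [bnx bnW]] := b_base x W (set_mem xW).
  by apply: (set_mem yW); apply/bnW/bxy.
have [n [bny bnW]] := b_base y W (set_mem yW).
by apply: (set_mem xW); apply/bnW/bxy.
Qed.

Lemma admissible_lift (X : topologicalType) (D : set baire) (rho : baire -> X)
    (Df : set baire) (f : baire -> X) :
  admissible D rho -> {within Df, continuous f} ->
  exists h : set_type Df -> set_type D,
    continuous h /\ forall p, f (val p) = rho (val (h p)).
Proof.
move=> [_ rho_adm] f_cont; have [Dg [g [g_cont [DfE fg]]]] := rho_adm _ _ f_cont.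
have gD q : Df q -> D (g q) by rewrite DfE => -[].
exists (fun p => exist _ (g (val p)) (mem_set (gD _ (set_mem (valP p))))); split.
  apply: continuous_comp_initial; apply/subspace_sigL_continuousP.
  by apply: continuous_subspaceW g_cont; rewrite DfE => p [].
by move=> p; apply: fg; exact: set_mem (valP p).
Qed.

Section StandardRepresentation.
Variables (X : topologicalType) (b : nat -> set X).
Hypothesis b_open : forall n, open (b n).
Hypothesis b_base : forall x W, nbhs x W -> exists n, b n x /\ b n `<=` W.
Hypothesis b_sep : forall x y, (forall n, b n x <-> b n y) -> x = y.
Variable x0 : X.

(* A name of x lists, shifted by one, the indices of the basic open sets
   containing x; the entry 0 is padding and carries no information. *)
Definition is_name (p : baire) x := forall n, b n x <-> exists i, p i = n.+1.

Definition name_dom : set baire := [set p | exists x, is_name p x].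

(* [x0] is only the junk value off [name_dom]. *)
Definition decode (p : baire) : X :=
  if pselect (exists x, is_name p x) is left e then projT1 (cid e) else x0.

Lemma decodeE p x : is_name p x -> decode p = x.
Proof.
move=> px; rewrite /decode; case: pselect => [e|[]]; last by exists x.
by case: (cid e) => y py /=; apply: b_sep => n; split=> [/py/px|/px/py].
Qed.

Definition canonical_name x : baire := fun i => if `[< b i x >] then i.+1 else 0.

Lemma canonical_nameP x : is_name (canonical_name x) x.
Proof.
move=> n; split=> [bnx|[i]]; first by exists n; rewrite /canonical_name asboolT.
by rewrite /canonical_name; case: asboolP => // bix [<-].
Qed.

Definition delta (p : set_type name_dom) : X := decode (val p).

Definition name_of q x (qx : is_name q x) : set_type name_dom :=
  exist _ q (mem_set (ex_intro _ x qx)).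

Lemma delta_name (p : set_type name_dom) : is_name (val p) (delta p).
Proof.
by case: p => q qD; have [x qx] := set_mem qD; rewrite /delta /= (decodeE qx).
Qed.

Definition name_cylinder (s : seq nat) : set (set_type name_dom) := val @^-1` cylinder s.

Lemma name_cylinder_open s : open (name_cylinder s).
Proof. by exists (cylinder s) => //; exact: cylinder_open. Qed.

Lemma name_cylinder_extend (U : set (set_type name_dom)) p s :
  open U -> U p -> name_cylinder s p ->
  exists t, [/\ prefix s t, name_cylinder t p & name_cylinder t `<=` U].
Proof.
move=> [V oV <-] Vp ps.
have [k pkV] := (baire_nbhsP _ _).1 (open_nbhs_nbhs (conj oV Vp)).
exists (mkseq (val p) (maxn k (size s))); split.
- exact: prefix_mkseq ps (leq_maxr _ _).
- exact: cylinder_mkseq.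
- by move=> q qs; apply/pkV/(cylinder_mkseqS (leq_maxl k (size s))).
Qed.

Lemma name_cylinder_base (U : set (set_type name_dom)) p :
  open U -> U p -> exists2 s, name_cylinder s p & name_cylinder s `<=` U.
Proof.
move=> oU Up; have [|s [_ ps sU]] := name_cylinder_extend (s := [::]) oU Up.
  by move=> i; rewrite ltn0.
by exists s.
Qed.

Definition name_entry x (c : nat) : bool := if c is n.+1 then `[< b n x >] else true.

Lemma name_entry_canonical x k : name_entry x (canonical_name x k).
Proof. by rewrite /canonical_name; case: asboolP => //= bkx; exact/asboolP. Qed.

Lemma fiber_name_cylinder x s :
  fiber delta x `&` name_cylinder s !=set0 <-> all (name_entry x) s.
Proof.
split=> [[p [xp ps]]|xs].
  apply/allP => _ /(nthP 0) [i lti <-]; rewrite -(ps i lti).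
  case pi: (val p i) => [//|n] /=; apply/asboolP; rewrite -xp.
  by apply/(delta_name p n); exists i.
pose q i := if (i < size s)%N then nth 0 s i else canonical_name x (i - size s).
have qx : is_name q x.
  move=> n; split=> [bnx|[i]].
    exists (size s + n)%N; rewrite /q ltnNge leq_addr /= addKn.
    by rewrite /canonical_name asboolT.
  rewrite /q; case: ifP => [lti si|_ qi].
    by have := allP xs _ (mem_nth 0 lti); rewrite si => /asboolP.
  by apply/(canonical_nameP x n); exists (i - size s)%N.
by exists (name_of qx); split; [exact: decodeE | move=> i lti; rewrite /= /q lti].
Qed.

Lemma delta_continuous : continuous delta.
Proof.
move=> p W /= /b_base [n [bnp bnW]].
have [i pi] := (delta_name p n).1 bnp.
apply: (@filterS _ _ _ (name_cylinder (mkseq (val p) i.+1))).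
  move=> q qp; apply/bnW/(delta_name q n); exists i.
  by rewrite qp ?size_mkseq // nth_mkseq.
apply: open_nbhs_nbhs; split; [exact: name_cylinder_open | exact: cylinder_mkseq].
Qed.

Lemma decode_continuous : {within name_dom, continuous decode}.
Proof. exact/subspace_sigL_continuousP/delta_continuous. Qed.

Lemma name_entry_open c : open [set x | name_entry x c].
Proof.
case: c => [|n] /=.
  by rewrite (_ : [set x | true] = setT); [exact: openT | apply/seteqP; split].
rewrite (_ : [set x | `[< b n x >]] = b n); first exact: b_open.
by apply/seteqP; split => x /asboolP.
Qed.

Lemma name_entries_open s : open [set x | all (name_entry x) s].
Proof.
elim: s => [|c s IH]; first exact: (name_entry_open 0).
rewrite (_ : [set x | _] = [set x | name_entry x c] `&` [set x | all (name_entry x) s]).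
  exact: openI (name_entry_open c) IH.
by apply/seteqP; split => x /andP.
Qed.

Lemma delta_open (U : set (set_type name_dom)) : open U -> open (delta @` U).
Proof.
move=> oU; rewrite openE => _ [p Up <-].
have [s ps sU] := name_cylinder_base oU Up.
apply: (@filterS _ _ _ [set y | all (name_entry y) s]).
  by move=> y /fiber_name_cylinder [q [yq qs]]; exists q => //; exact: sU.
apply: open_nbhs_nbhs; split; first exact: name_entries_open.
by apply/fiber_name_cylinder; exists p.
Qed.

Lemma delta_surj x : exists p, delta p = x.
Proof. by exists (name_of (canonical_nameP x)); exact: decodeE (canonical_nameP x). Qed.

Lemma fiber_nowhere_dense_extend x E s :
  fiber_nowhere_dense delta name_cylinder x E -> all (name_entry x) s ->
  exists t, [/\ prefix s t, all (name_entry x) t &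
    fiber delta x `&` name_cylinder t `&` E `<=` set0].
Proof.
move=> nwdE /fiber_name_cylinder /nwdE [m [ms [p [xp pm]] mE]].
have [t [st pt tm]] := name_cylinder_extend (name_cylinder_open m) pm (ms p pm).
exists t; split => //; first by apply/fiber_name_cylinder; exists p.
by move=> q [[xq qt] Eq]; apply: (mE q); split => //; split => //; exact: tm.
Qed.

(* A meager cover is defeated by the limit of a chain of prefixes: step k
   avoids the k-th nowhere dense set and appends the k-th entry of the
   canonical name of x, so that the limit is again a name of x. *)
Lemma delta_fiber_baire x s : fiber delta x `&` name_cylinder s !=set0 ->
  ~ fiber_meager delta name_cylinder x (name_cylinder s).
Proof.
move=> /fiber_name_cylinder xs [Es [Es_nwd cover]].
have /choice [next nextP] : forall kt : nat * seq nat, exists t,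
    all (name_entry x) kt.2 -> [/\ prefix kt.2 t, all (name_entry x) t &
      fiber delta x `&` name_cylinder t `&` Es kt.1 `<=` set0].
  move=> [k t]; case: (boolP (all (name_entry x) t)) => [xt|_]; last by exists t.
  by have [u ?] := fiber_nowhere_dense_extend (Es_nwd k) xt; exists u.
pose fix ts k := if k is k'.+1 then rcons (next (k', ts k')) (canonical_name x k') else s.
have ts_entries k : all (name_entry x) (ts k).
  elim: k => [//|k IH] /=; have [_ xn _] := nextP (k, ts k) IH.
  by rewrite all_rcons xn andbT name_entry_canonical.
have ts_prefix k : prefix (ts k) (ts k.+1).
  have [st _ _] := nextP (k, ts k) (ts_entries k).
  exact: (@prefix_trans _ (next (k, ts k)) _ _ st (prefix_rcons _ _)).
have ts_size k : (k <= size (ts k))%N.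
  elim: k => [//|k IH] /=; have [st _ _] := nextP (k, ts k) (ts_entries k).
  by rewrite size_rcons ltnS (leq_trans IH (size_prefix st)).
pose q : baire := fun i => nth 0 (ts i.+1) i.
have q_ts k : cylinder (ts k) q.
  move=> i lti; have ki := prefix_mono ts_prefix (leq_maxl k i.+1).
  rewrite /q -(prefix_nth (prefix_mono ts_prefix (leq_maxr k i.+1)) (ts_size _)).
  exact: prefix_nth ki lti.
have qx : is_name q x.
  move=> n; split=> [bnx|[i qi]].
    exists (size (next (n, ts n))); rewrite (q_ts n.+1) /= ?size_rcons //.
    by rewrite nth_rcons ltnn eqxx /canonical_name asboolT.
  have := allP (ts_entries i.+1) _ (mem_nth 0 (ts_size i.+1)).
  by rewrite -/(q i) qi => /asboolP.
have [k _ Ekq] := cover (name_of qx) (conj (decodeE qx) (q_ts 0)).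
have [_ _ disj] := nextP (k, ts k) (ts_entries k).
apply: (disj (name_of qx)); split => //; split; first exact: decodeE.
exact: cylinder_prefix (prefix_rcons _ _) _ (q_ts k.+1).
Qed.

End StandardRepresentation.

Theorem theorem68 (X : topologicalType) (D : set baire) (rho : baire -> X) :
  @second_countable X -> kolmogorov_space X -> admissible D rho ->
  forall (A Th : cwo), inhabited A -> inhabited Th ->
  forall S : set X,
    Diff A (Sigma Th) S <->
    Diff A (Sigma Th) [set p : set_type D | S (rho (val p))].
Proof.
(* The argument does not need alpha, theta > 0. *)
move=> scX T0X rho_adm A Th _ _ S.
have rho_cont : continuous (sigL D rho) by apply/subspace_sigL_continuousP; case: rho_adm.
split; first exact: Diff_preimage.
move=> SD; have [b [b_open b_base]] := second_countable_nat_base scX.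
have b_sep := kolmogorov_base_eq T0X b_base.
pose x0 := rho (fun=> 0).
have [h [h_cont decode_h]] :=
  admissible_lift rho_adm (@decode_continuous _ _ b_base b_sep x0).
apply: (Diff_vaught (name_cylinder_open b) (@name_cylinder_base _ b)
  (@delta_fiber_baire _ _ b_sep x0) (delta_open b_open b_sep x0) (delta_surj b_sep x0)).
have -> : @delta _ b x0 @^-1` S = h @^-1` [set p | S (rho (val p))].
  by apply/seteqP; split => p; rewrite /= /delta decode_h.
exact (Diff_preimage h_cont SD).
Qed.
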